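(* Consider learning a concept $c$ with the 1-nearest neighbor rule on a metric space $(\mathcal{X},\rho)$. If $U\subset\mathcal{X}$ is a mutually-labeling set for $c$ and $x_t\in U$ for some time $t$, then for every $\tau>t$ the hypothesis $h_\tau$ satisfies $h_\tau(x)=c(x)$ for all $x\in U$. Consequently $U$ is a locally learned set for $c$.
   Context: Margin: $m_c(x)=\inf_{x':c(x')\ne c(x)}\rho(x,x')$. A set $U$ is mutually-labeling for $c$ if $\rho(x,x')<m_c(x)$ for all $x,x'\in U$. The 1-nearest neighbor hypothesis at time $\tau$ is $h_\tau(x)=c(x_{\sigma})$ with $\sigma\in\arg\min_{s<\tau}\rho(x,x_s)$ (ties arbitrary). A set $U$ is locally learned for $c$ if for every sequence $(x_t)_t$, either $x_t\in U$ finitely often or $\sup_{x\in U}\mathcal{E}_t(x)\to0$, where $\mathcal{E}_t(x)=\ell(x,c(x),h_t(x))$ for a non-negative bounded loss with $\ell(x,y,y)=0$. *)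

From mathcomp Require Import all_boot all_order all_algebra.
From mathcomp Require Import all_classical all_reals all_analysis.
Set Implicit Arguments. Unset Strict Implicit. Unset Printing Implicit Defensive.
Import Order.TTheory GRing.Theory Num.Theory.
Local Open Scope classical_set_scope.
Local Open Scope ring_scope.

Definition is_metric {R : realType} {X : Type} (rho : X -> X -> R) : Prop :=
  [/\ forall x y, 0 <= rho x y,
      forall x y, rho x y = 0 <-> x = y,
      forall x y, rho x y = rho y x &
      forall x y z, rho x z <= rho x y + rho y z].

(* margin m_c(x) = inf_{x' : c x' <> c x} rho(x,x'), in the extended reals
   (= +oo when no such x' exists) *)
Definition margin {R : realType} {X Y : Type} (rho : X -> X -> R) (c : X -> Y)
  (x : X) : \bar R :=
  ereal_inf [set (rho x x')%:E | x' in [set x' | c x' <> c x]].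

Definition mutually_labeling {R : realType} {X Y : Type} (rho : X -> X -> R)
  (c : X -> Y) (U : set X) : Prop :=
  forall x x', U x -> U x' -> ((rho x x')%:E < margin rho c x)%E.

(* h is a 1-nearest-neighbor hypothesis at time tau for the sequence xs
   (with some arbitrary tie breaking, possibly depending on the query point) *)
Definition nn_hyp {R : realType} {X Y : Type} (rho : X -> X -> R) (c : X -> Y)
  (xs : nat -> X) (tau : nat) (h : X -> Y) : Prop :=
  forall z, exists2 s, (s < tau)%N &
    (forall s', (s' < tau)%N -> rho z (xs s) <= rho z (xs s')) /\ h z = c (xs s).

(* h : nat -> X -> Y is a run of the 1-NN rule on xs: h tau is a 1-NN
   hypothesis at every time tau >= 1 (h 0 is unconstrained: no data yet) *)
Definition nn_learner {R : realType} {X Y : Type} (rho : X -> X -> R) (c : X -> Y)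
  (xs : nat -> X) (h : nat -> X -> Y) : Prop :=
  forall tau, (0 < tau)%N -> nn_hyp rho c xs tau (h tau).

Definition locally_learned {R : realType} {X Y : Type} (rho : X -> X -> R)
  (c : X -> Y) (ell : X -> Y -> Y -> R) (U : set X) : Prop :=
  forall (xs : nat -> X) (h : nat -> X -> Y), nn_learner rho c xs h ->
    finite_set [set t | U (xs t)] \/
    ((fun t => ereal_sup [set (ell x (c x) (h t x))%:E | x in U]) @ \oo --> 0%:E)%E.

From mathcomp Require Import all_boot all_order all_algebra.
From mathcomp Require Import all_classical all_reals all_analysis.
Import Order.TTheory GRing.Theory Num.Theory.
Local Open Scope classical_set_scope.
Local Open Scope ring_scope.

(* Every point x' labelled differently from x lies at distance
   at least the margin m_c(x) from x.  If U is mutually labeling and x, x' are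
   in U, then any z with rho x z <= rho x x' is strictly closer to x than the
   margin, hence carries the label c x.  Once some training point x_t lies in
   U, the nearest neighbour x_s of any query x in U is at least as close as
   x_t, so h_tau x = c (x_s) = c x for every tau > t.  For local learning,
   either U is never visited (the set of visit times is empty, hence finite),
   or it is visited at some time t; from t+1 on the loss vanishes on U, so the
   supremum of the loss over U is eventually the constant 0.  None of the
   metric axioms nor the boundedness of the loss is needed for this. *)

Section NearestNeighborOnMutuallyLabelingSets.

Variables (R : realType) (X Y : Type) (rho : X -> X -> R) (c : X -> Y).

Lemma margin_le_dist (x x' : X) :
  c x' <> c x -> (margin rho c x <= (rho x x')%:E)%E.
Proof. by move=> neq; apply: ge_ereal_inf; exists (rho x x')%:E => //; exists x'. Qed.

Lemma mutually_labeling_label (U : set X) (x x' z : X) :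
  mutually_labeling rho c U -> U x -> U x' ->
  rho x z <= rho x x' -> c z = c x.
Proof.
move=> ML Ux Ux' zx'; apply: contrapT => neq.
have closer : ((rho x z)%:E < margin rho c x)%E.
  by apply: le_lt_trans (ML x x' Ux Ux'); rewrite lee_fin.
by have := lt_le_trans closer (margin_le_dist _ _ neq); rewrite ltxx.
Qed.

Lemma nn_hyp_exact_on (U : set X) (xs : nat -> X) (t tau : nat) (h : X -> Y) :
  mutually_labeling rho c U -> nn_hyp rho c xs tau h ->
  (t < tau)%N -> U (xs t) -> forall x, U x -> h x = c x.
Proof.
move=> ML NN ttau Ut x Ux.
have [s _ [nearest ->]] := NN x.
exact: mutually_labeling_label ML Ux Ut (nearest t ttau).
Qed.

End NearestNeighborOnMutuallyLabelingSets.

Lemma sup_loss_exact (R : realType) (X Y : Type) (ell : X -> Y -> Y -> R)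
    (c h : X -> Y) (U : set X) (x0 : X) :
  (forall x y, ell x y y = 0) -> U x0 -> (forall x, U x -> h x = c x) ->
  ereal_sup [set (ell x (c x) (h x))%:E | x in U] = 0%:E.
Proof.
move=> ell0 Ux0 exact_h.
suff -> : [set (ell x (c x) (h x))%:E | x in U] = [set 0%:E] by exact: ereal_sup1.
apply/seteqP; split => y /=.
  by case=> x Ux <-; rewrite exact_h ?ell0.
by move=> ->; exists x0 => //; rewrite exact_h ?ell0.
Qed.

Theorem lemma5 (R : realType) (X Y : Type) (rho : X -> X -> R) (c : X -> Y)
  (U : set X) (ell : X -> Y -> Y -> R) :
  is_metric rho ->
  (forall x y y', 0 <= ell x y y') ->
  (exists B : R, forall x y y', ell x y y' <= B) ->
  (forall x y, ell x y y = 0) ->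
  mutually_labeling rho c U ->
  (forall (xs : nat -> X) (h : nat -> X -> Y) (t : nat),
      nn_learner rho c xs h -> U (xs t) ->
      forall tau, (t < tau)%N -> forall x, U x -> h tau x = c x)
  /\ locally_learned rho c ell U.
Proof.
move=> _ _ _ ell0 ML.
have exact_after : forall (xs : nat -> X) (h : nat -> X -> Y) (t : nat),
    nn_learner rho c xs h -> U (xs t) ->
    forall tau, (t < tau)%N -> forall x, U x -> h tau x = c x.
  move=> xs h t NN Ut tau ttau.
  exact: nn_hyp_exact_on ML (NN tau (leq_ltn_trans (leq0n t) ttau)) ttau Ut.
split=> // xs h NN.
have [[t Ut]|never] := pselect (exists t, U (xs t)).
  right; apply: cvg_near_cst; exists t.+1 => // tau /= ttau.
  exact: sup_loss_exact ell0 Ut (exact_after xs h t NN Ut tau ttau).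
left; suff -> : [set t | U (xs t)] = set0 by exact: finite_set0.
by apply/seteqP; split => t //= Ut; apply: never; exists t.
Qed.
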